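(* Let $K$ be a field and let $f\colon\mathbb Z^k\to K$ be a hypergeometric term on $\mathbb Z^k$ that is not a zero divisor. Then for any finite sequence $\vec w_1,\dots,\vec w_n$ of vectors in $\mathbb Z^k$, the hypergeometric term $f^{\vec w_1}f^{\vec w_2}\cdots f^{\vec w_n}$ (pointwise product) is not a zero divisor.
   Context: $f^{\vec w}(\vec z)=f(\vec z+\vec w)$. A hypergeometric term on $\mathbb Z^k$ over $K$ is a function $f\colon\mathbb Z^k\to K$ such that for each $i\in\{1,\dots,k\}$ there are nonzero polynomials $A_i,B_i\in K[\vec z]$ with $A_i(\vec z)f(\vec z)=B_i(\vec z)f(\vec z+\vec e_i)$ for all $\vec z\in\mathbb Z^k$. A function $g\colon\mathbb Z^k\to K$ is a zero divisor if there is a nonzero polynomial $p$ with $p(\vec z)g(\vec z)=0$ for all $\vec z\in\mathbb Z^k$. *)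

From HB Require Import structures.
From mathcomp Require Import all_boot all_order all_algebra.
From mathcomp Require Import mpoly.
Set Implicit Arguments. Unset Strict Implicit. Unset Printing Implicit Defensive.
Import GRing.Theory.
Local Open Scope ring_scope.

Definition zvec (k : nat) := 'I_k -> int.

Definition zeval (K : fieldType) (k : nat) (p : {mpoly K[k]}) (z : zvec k) : K :=
  p.@[fun i => (z i)%:~R].

Definition zadd (k : nat) (z w : zvec k) : zvec k := fun i => z i + w i.

Definition zunit (k : nat) (i : 'I_k) : zvec k := fun j => (i == j)%:R.

Definition zshift (K : fieldType) (k : nat) (f : zvec k -> K) (w : zvec k) : zvec k -> K :=
  fun z => f (zadd z w).

Definition hypergeometric_term (K : fieldType) (k : nat) (f : zvec k -> K) : Prop :=
  forall i : 'I_k, exists A B : {mpoly K[k]},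
    A != 0 /\ B != 0 /\
    forall z : zvec k, zeval A z * f z = zeval B z * f (zadd z (zunit i)).

Definition zero_divisor (K : fieldType) (k : nat) (g : zvec k -> K) : Prop :=
  exists p : {mpoly K[k]}, p != 0 /\ forall z : zvec k, zeval p z * g z = 0.

Definition shift_prod (K : fieldType) (k : nat) (f : zvec k -> K) (ws : seq (zvec k))
  : zvec k -> K :=
  fun z => \prod_(w <- ws) zshift f w z.

From mathcomp Require Import all_boot all_order all_algebra.
From mathcomp Require Import mpoly.
From Stdlib Require Import FunctionalExtensionality.
Set Implicit Arguments. Unset Strict Implicit. Unset Printing Implicit Defensive.
Import GRing.Theory.
Local Open Scope ring_scope.

(* Call a shift w controlled for f if, off the zero set of some nonzero
   polynomial, f z <> 0 forces f (z + w) <> 0.  A hypergeometric recurrence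
   A f(z) = B f(z + e_i) makes e_i and -e_i controlled, and controlled shifts
   are closed under addition (translate the polynomial), so every shift is
   controlled.  Multiplying the polynomials for w_1, ..., w_n gives a nonzero
   Q with Q(z) f(z) <> 0 -> f^{w_1}...f^{w_n}(z) <> 0; hence if p annihilates
   the product, then p Q annihilates f. *)

Section ZvecArith.
Variable k : nat.

Lemma zvec_eq (u v : zvec k) : u =1 v -> u = v.
Proof. exact: functional_extensionality. Qed.

Lemma zaddA (u v w : zvec k) : zadd (zadd u v) w = zadd u (zadd v w).
Proof. by apply: zvec_eq => i; rewrite /zadd addrA. Qed.

Lemma zaddz0 (u : zvec k) : zadd u (fun _ => 0) = u.
Proof. by apply: zvec_eq => i; rewrite /zadd addr0. Qed.

End ZvecArith.

Section ShiftPolynomial.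
Variables (K : fieldType) (k : nat).

Definition shiftX (u : zvec k) : k.-tuple {mpoly K[k]} :=
  [tuple 'X_i + ((u i)%:~R)%:MP | i < k].

Lemma zeval_shiftX (A : {mpoly K[k]}) (u z : zvec k) :
  zeval (A \mPo shiftX u) z = zeval A (zadd z u).
Proof.
rewrite /zeval comp_mpoly_meval; apply: meval_eq => i.
by rewrite tnth_map tnth_ord_tuple mevalD mevalXU mevalC intrD.
Qed.

Lemma comp_mpoly_shiftX (A : {mpoly K[k]}) (u v : zvec k) :
  (A \mPo shiftX u) \mPo shiftX v = A \mPo shiftX (zadd u v).
Proof.
rewrite [A \mPo shiftX u]comp_mpolyE raddf_sum [RHS]comp_mpolyE /=.
apply: eq_bigr => m _; rewrite comp_mpolyZ rmorph_prod /=; congr (_ *: _).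
apply: eq_bigr => i _; rewrite rmorphXn /= !tnth_map !tnth_ord_tuple.
rewrite comp_mpolyD comp_mpolyC comp_mpolyXU -tnth_nth tnth_map tnth_ord_tuple.
by rewrite -addrA -rmorphD /= /zadd [u i + _]addrC intrD.
Qed.

Lemma comp_mpoly_shiftX0 (A : {mpoly K[k]}) : A \mPo shiftX (fun _ => 0) = A.
Proof.
rewrite -[RHS]comp_mpoly_id; congr comp_mpoly.
by apply: eq_from_tnth => i; rewrite !tnth_map !tnth_ord_tuple addr0.
Qed.

Lemma comp_mpoly_shiftX_eq0 (A : {mpoly K[k]}) (u : zvec k) :
  (A \mPo shiftX u == 0) = (A == 0).
Proof.
apply/eqP/eqP => [A0|->]; last exact: comp_mpoly0.
have uNu : zadd u (fun i => - u i) = fun _ => 0 by apply: zvec_eq => i; apply: subrr.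
by rewrite -[A]comp_mpoly_shiftX0 -uNu -comp_mpoly_shiftX A0 comp_mpoly0.
Qed.

End ShiftPolynomial.

Arguments shiftX {K k} u.

Section ControlledShift.
Variables (K : fieldType) (k : nat) (f : zvec k -> K).

Definition controlled_shift (w : zvec k) : Prop :=
  exists Q : {mpoly K[k]}, Q != 0 /\
    forall z, zeval Q z != 0 -> f z != 0 -> f (zadd z w) != 0.

Lemma controlled_shift0 : controlled_shift (fun _ => 0).
Proof. by exists 1; split=> [|z _]; rewrite ?oner_neq0 ?zaddz0. Qed.

Lemma controlled_shiftD (u v : zvec k) :
  controlled_shift u -> controlled_shift v -> controlled_shift (zadd u v).
Proof.
move=> [Q [Q_neq0 fuP]] [R [R_neq0 fvP]].
exists (Q * (R \mPo shiftX u)); split.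
  by rewrite mulf_neq0 // comp_mpoly_shiftX_eq0.
move=> z; rewrite /zeval mevalM mulf_eq0 negb_or -!/(zeval _ _) zeval_shiftX.
by case/andP=> Qz Rzu fz; rewrite -zaddA; apply: fvP Rzu (fuP z Qz fz).
Qed.

Hypothesis hf : hypergeometric_term f.

Lemma controlled_shift_unit (i : 'I_k) : controlled_shift (zunit i).
Proof.
have [A [B [A_neq0 [_ rec]]]] := hf i.
exists A; split=> // z Az fz; apply: contraNneq (mulf_neq0 Az fz) => fz1.
by rewrite rec fz1 mulr0.
Qed.

Lemma controlled_shift_unitN (i : 'I_k) : controlled_shift (fun j => - zunit i j).
Proof.
set u := fun j => - zunit i j.
have [A [B [_ [B_neq0 rec]]]] := hf i.
exists (B \mPo shiftX u); split; first by rewrite comp_mpoly_shiftX_eq0.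
move=> z; rewrite zeval_shiftX => Bz fz.
have back : zadd (zadd z u) (zunit i) = z.
  by rewrite zaddA -[RHS]zaddz0; congr zadd; apply: zvec_eq => j; apply: addNr.
apply: contraNneq (mulf_neq0 Bz fz) => fzu.
by rewrite -{2}back -rec fzu mulr0.
Qed.

Lemma controlled_shift_unitZ (i : 'I_k) (c : int) :
  controlled_shift (fun j => c * zunit i j).
Proof.
elim/int_rect: c => [|n IH|n IH].
- have -> : (fun j => 0 * zunit i j) = fun _ => 0.
    by apply: zvec_eq => j; rewrite mul0r.
  exact: controlled_shift0.
- have -> : (fun j => n.+1%:Z * zunit i j) =
            zadd (fun j => n%:Z * zunit i j) (zunit i).
    by apply: zvec_eq => j; rewrite /zadd -[n.+1]addn1 PoszD mulrDl mul1r.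
  exact: controlled_shiftD IH (controlled_shift_unit i).
- have -> : (fun j => - n.+1%:Z * zunit i j) =
            zadd (fun j => - n%:Z * zunit i j) (fun j => - zunit i j).
    by apply: zvec_eq => j; rewrite /zadd -[n.+1]addn1 PoszD opprD mulrDl mulN1r.
  exact: controlled_shiftD IH (controlled_shift_unitN i).
Qed.

Lemma controlled_shift_restrict (s : seq 'I_k) (w : zvec k) : uniq s ->
  controlled_shift (fun i => if i \in s then w i else 0).
Proof.
elim: s => [_|i s IH /= /andP[i_notin_s /IH ctrl_s]].
  have -> : (fun j : 'I_k => if j \in [::] then w j else 0) = fun _ => 0.
    exact: zvec_eq.
  exact: controlled_shift0.
have -> : (fun j => if j \in i :: s then w j else 0) =
    zadd (fun j => if j \in s then w j else 0) (fun j => w i * zunit i j).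
  apply: zvec_eq => j; rewrite /zadd /zunit inE.
  have [->|_] := eqVneq j i; first by rewrite (negbTE i_notin_s) add0r mulr1.
  by rewrite mulr0 addr0.
exact: controlled_shiftD ctrl_s (controlled_shift_unitZ i (w i)).
Qed.

Lemma controlled_shift_all (w : zvec k) : controlled_shift w.
Proof.
have -> : w = fun i => if i \in enum 'I_k then w i else 0.
  by apply: zvec_eq => i; rewrite mem_enum.
exact/controlled_shift_restrict/enum_uniq.
Qed.

Lemma shift_prod_controlled (ws : seq (zvec k)) :
  exists Q : {mpoly K[k]}, Q != 0 /\
    forall z, zeval Q z != 0 -> f z != 0 -> shift_prod f ws z != 0.
Proof.
elim: ws => [|w ws [Q [Q_neq0 prodP]]].
  by exists 1; split=> [|z _ _]; rewrite /shift_prod ?big_nil oner_neq0.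
have [R [R_neq0 fwP]] := controlled_shift_all w.
exists (R * Q); split; first by rewrite mulf_neq0.
move=> z; rewrite /zeval mevalM mulf_eq0 negb_or -!/(zeval _ _).
case/andP=> Rz Qz fz; rewrite /shift_prod big_cons.
by rewrite mulf_neq0 //; [apply: fwP | apply: prodP].
Qed.

End ControlledShift.

Lemma zero_divisor_transfer (K : fieldType) (k : nat) (f g : zvec k -> K)
    (Q : {mpoly K[k]}) :
  Q != 0 -> (forall z, zeval Q z != 0 -> f z != 0 -> g z != 0) ->
  zero_divisor g -> zero_divisor f.
Proof.
move=> Q_neq0 gP [p [p_neq0 pg0]]; exists (p * Q); split; first by rewrite mulf_neq0.
move=> z; rewrite /zeval mevalM -!/(zeval _ _).
have [->|fz] := eqVneq (f z) 0; first by rewrite mulr0.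
have [->|Qz] := eqVneq (zeval Q z) 0; first by rewrite mulr0 mul0r.
have /eqP := pg0 z; rewrite mulf_eq0 (negbTE (gP z Qz fz)) orbF => /eqP->.
by rewrite !mul0r.
Qed.

Theorem lemmaB16 (K : fieldType) (k : nat) (f : zvec k -> K) (ws : seq (zvec k)) :
  hypergeometric_term f -> ~ zero_divisor f -> ~ zero_divisor (shift_prod f ws).
Proof.
move=> hf f_nzd prod_zd; have [Q [Q_neq0 prodP]] := shift_prod_controlled hf ws.
exact/f_nzd/(zero_divisor_transfer Q_neq0 prodP).
Qed.
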